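(* Let $n\ge3$ and $0<q<1$. For every relationship network $G$ on $V$ satisfying structural balance, the duples mechanism selects a needy agent with probability $$P_D(G)\ \ge\ q+q(1-q)\,\frac{3n-8}{8(n-1)}.$$
   Context: A relationship network $G$ on $V=\{1,\dots,n\}$ assigns to every unordered pair of distinct agents exactly one of the symmetric relations friends, enemies, impartial; $F_j,E_j,I_j$ are the friends, enemies, impartials of $j$. Structural balance: for all pairwise distinct $i,j,k$: $j\in F_i,k\in F_j\Rightarrow k\in F_i$; $j\in E_i,k\in E_j\Rightarrow k\in F_i$; $j\in E_i,k\in F_j\Rightarrow k\in E_i$. Each agent is needy independently with probability $q$; $N$ is the random needy set; every agent $j$ reports truthfully $(N,F_j,E_j)$. Duples mechanism $g^D$: for agent $l$ and $j\ne l$, $\mathrm{lev}_l(j)=1,\dots,6$ according as $j\in F_l\cap N$, $F_l\setminus N$, $I_l\cap N$, $I_l\setminus N$, $E_l\cap N$, $E_l\setminus N$. For distinct $j,k$, agent $l\notin\{j,k\}$ votes for $j$ against $k$ if $\mathrm{lev}_l(j)<\mathrm{lev}_l(k)$ (abstains if equal); $x_{jk}$ counts these votes. $g^D_j(\{j,k\})=1,\tfrac12,0$ as $x_{jk}>,=,<x_{kj}$, $g^D_k(\{j,k\})=1-g^D_j(\{j,k\})$, and $g^D_i=\frac{2}{n(n-1)}\sum_{j\ne i}g^D_i(\{i,j\})$. $P_D(G)=\mathbb E[\sum_{i\in N}g^D_i]$ under truthful reports. *)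

From HB Require Import structures.
From mathcomp Require Import all_boot all_order all_algebra.
Set Implicit Arguments. Unset Strict Implicit. Unset Printing Implicit Defensive.
Import Order.TTheory GRing.Theory Num.Theory.

Inductive relation3 := Friends | Enemies | Impartial.

(* A relationship network on V = 'I_n : the relation of the unordered pair
   {i,j} (i <> j); diagonal values are irrelevant. *)
Definition network (n : nat) := 'I_n -> 'I_n -> relation3.

Definition symmetric_network n (G : network n) : Prop :=
  forall i j : 'I_n, i != j -> G i j = G j i.

Definition structurally_balanced n (G : network n) : Prop :=
  forall i j k : 'I_n, i != j -> j != k -> i != k ->
    [/\ (G i j = Friends -> G j k = Friends -> G i k = Friends),
        (G i j = Enemies -> G j k = Enemies -> G i k = Friends) &
        (G i j = Enemies -> G j k = Friends -> G i k = Enemies)].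

Definition lev n (G : network n) (N : {set 'I_n}) (l j : 'I_n) : nat :=
  match G l j with
  | Friends => if j \in N then 1 else 2
  | Impartial => if j \in N then 3 else 4
  | Enemies => if j \in N then 5 else 6
  end.

Definition votes n (G : network n) (N : {set 'I_n}) (j k : 'I_n) : nat :=
  #|[set l : 'I_n | (l != j) && (l != k) && (lev G N l j < lev G N l k)%N]|.

Local Open Scope ring_scope.

Definition gpair (R : fieldType) n (G : network n) (N : {set 'I_n}) (j k : 'I_n) : R :=
  let a := votes G N j k in let b := votes G N k j in
  if (b < a)%N then 1 else if a == b then 2^-1 else 0.

Definition gD (R : fieldType) n (G : network n) (N : {set 'I_n}) (i : 'I_n) : R :=
  (2 / (n%:R * (n%:R - 1))) * \sum_(j : 'I_n | j != i) gpair R G N i j.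

Definition probN (R : fieldType) n (q : R) (N : {set 'I_n}) : R :=
  q ^+ #|N| * (1 - q) ^+ (n - #|N|).

(* P_D(G) = E[ sum_{i in N} g^D_i ] under truthful reports. *)
Definition PD (R : fieldType) n (q : R) (G : network n) : R :=
  \sum_(N : {set 'I_n}) probN q N * \sum_(i in N) gD R G N i.

From HB Require Import structures.
From mathcomp Require Import all_boot all_order all_algebra.
From mathcomp Require Import zify ring lra.
Import Order.TTheory GRing.Theory Num.Theory.
Set Implicit Arguments. Unset Strict Implicit. Unset Printing Implicit Defensive.

(* Averaging over the needy set, the duple {i, j} contributes q^2 when both agents
   are needy (its two shares sum to 1) and q(1-q) times the shares of the needy agent
   when exactly one is needy.  In the latter case the needy agent i wins unless at
   least half of the other agents strictly prefer j by relation alone; call such a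
   pair lopsided.  Hence P_D(G) >= q + q(1-q)(1 - B/(n(n-1))), where B is the
   number of ordered lopsided pairs, and it suffices to show 8B <= 5n^2.
   Under structural balance friends are never lopsided, no three pairwise impartial
   agents form a lopsided triangle, and a lopsided pair of enemies forces a friend
   clique of size >= n/2.  So the lopsided graph is triangle-free either everywhere
   or outside one clique of size c >= n/2, and Mantel's theorem bounds B by
   n^2/2, respectively by 2c(n-c) + (n-c)^2/2; both are at most 5n^2/8. *)

Lemma sum_nat_Cauchy (T : finType) (A : {pred T}) (f : T -> nat) :
  ((\sum_(x in A) f x) ^ 2 <= #|A| * \sum_(x in A) f x ^ 2)%N.
Proof.
have AMGM : (\sum_(x in A) \sum_(y in A) 2 * (f x * f y)
             <= \sum_(x in A) \sum_(y in A) (f x ^ 2 + f y ^ 2))%N.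
  by do 2!apply: leq_sum => ? _; exact: (nat_Cauchy _ _).1.
have sum_prod : (\sum_(x in A) \sum_(y in A) 2 * (f x * f y)
                 = 2 * (\sum_(x in A) f x) ^ 2)%N.
  rewrite -mulnn mulnA big_distrr /=; apply: eq_bigr => x _.
  by rewrite -!big_distrr /= mulnA mulnAC.
have sum_sqr : (\sum_(x in A) \sum_(y in A) (f x ^ 2 + f y ^ 2)
                = 2 * (#|A| * \sum_(x in A) f x ^ 2))%N.
  under eq_bigr do rewrite big_split /=.
  by rewrite big_split /= exchange_big /= !sum_nat_const addnn -mul2n.
by move: AMGM; rewrite sum_prod sum_sqr leq_mul2l.
Qed.

Section Mantel.
Variables (T : finType) (W : {set T}) (r : rel T).
Hypothesis r_sym : symmetric r.
Hypothesis r_triangle_free : forall u v w, u \in W -> v \in W -> w \in W ->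
  r u v -> r v w -> r u w -> False.

Local Notation deg u := #|[set v in W | r u v]|.

Lemma deg_sum u : (\sum_(v in W) r u v = deg u)%N.
Proof.
rewrite -sum1_card big_mkcond [RHS]big_mkcond /=.
by apply: eq_bigr => v _; rewrite inE; case: (v \in W); case: (r u v).
Qed.

Lemma deg_adj_le u v : u \in W -> v \in W -> r u v -> (deg u + deg v <= #|W|)%N.
Proof.
move=> uW vW ruv; rewrite -cardsUI.
have -> : [set w in W | r u w] :&: [set w in W | r v w] = set0.
  apply/setP => w; rewrite !inE; apply/negbTE/negP => /andP[/andP[wW ruw] /andP[_ rvw]].
  by apply: (r_triangle_free uW vW wW ruv rvw ruw).
rewrite cards0 addn0 subset_leq_card //.
by apply/subsetP => w; rewrite !inE => /orP[] /andP[].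
Qed.

Lemma sum_deg_sqr_le : (2 * \sum_(u in W) deg u ^ 2 <= #|W| * \sum_(u in W) deg u)%N.
Proof.
have -> : (2 * \sum_(u in W) deg u ^ 2
          = \sum_(u in W) \sum_(v in W) r u v * (deg u + deg v))%N.
  under [RHS]eq_bigr do under eq_bigr do rewrite mulnDr.
  under [RHS]eq_bigr do rewrite big_split /=.
  rewrite big_split /= [X in (_ + X)%N]exchange_big /= mul2n -addnn.
  congr (_ + _)%N; apply: eq_bigr => u _.
    by rewrite -big_distrl /= deg_sum mulnn.
  by under eq_bigr do rewrite r_sym; rewrite -big_distrl /= deg_sum mulnn.
rewrite big_distrr /=; apply: leq_sum => u uW.
rewrite -[X in (_ <= _ * X)%N]deg_sum big_distrr /=; apply: leq_sum => v vW.
by case ruv: (r u v); rewrite ?mul0n ?muln0 // mul1n muln1 deg_adj_le.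
Qed.

Theorem mantel : (2 * \sum_(u in W) deg u <= #|W| ^ 2)%N.
Proof.
have := sum_deg_sqr_le; have := sum_nat_Cauchy W (fun u => deg u).
nia.
Qed.
End Mantel.

Lemma sum_card_cut (T : finType) (r : rel T) (C : {set T}) :
  {in C &, forall u v, ~~ r u v} ->
  (\sum_u #|[set v | r u v]|
     <= 2 * (#|C| * #|~: C|) + \sum_(u in ~: C) #|[set v in ~: C | r u v]|)%N.
Proof.
move=> noC; rewrite (bigID (mem C)) /= mul2n -addnn -addnA leq_add //.
  rewrite -sum_nat_const leq_sum // => u uC; apply/subset_leq_card/subsetP => v.
  by rewrite !inE; apply: contraLR => /negbNE vC; exact: noC.
rewrite mulnC -sum_nat_const (eq_bigl (mem (~: C))) => [|u]; last by rewrite !inE.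
rewrite -big_split leq_sum //= => u _.
apply: leq_trans (leq_card_setU _ _).1; apply/subset_leq_card/subsetP => v.
by rewrite !inE; case: (v \in C).
Qed.

Definition rank3 (r : relation3) : nat :=
  match r with Friends => 0 | Impartial => 1 | Enemies => 2 end.
Definition unrank3 (k : nat) : relation3 :=
  match k with 0 => Friends | 1 => Impartial | _ => Enemies end.
Lemma rank3K : cancel rank3 unrank3. Proof. by case. Qed.
HB.instance Definition _ := Equality.copy relation3 (can_type rank3K).

Section Network.
Variables (n : nat) (G : network n).

(* [lev] ranks agents by relation first and by neediness second. *)
Definition prefer (i j : 'I_n) : {set 'I_n} :=
  [set l | (l != i) && (l != j) && (rank3 (G l i) < rank3 (G l j))%N].
Definition dominates (i j : 'I_n) : bool := (n - 2 <= 2 * #|prefer i j|)%N.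
(* With exactly one of i, j needy, the needy one may fail to win the duple outright. *)
Definition lopsided (i j : 'I_n) : bool := (i != j) && (dominates i j || dominates j i).
Definition friends_of (i : 'I_n) : {set 'I_n} := [set l | (l != i) && (G l i == Friends)].
Definition popular (i : 'I_n) : bool := (n - 2 <= 2 * #|friends_of i|)%N.
Definition clique (i : 'I_n) : {set 'I_n} := i |: friends_of i.

Lemma lopsided_sym : symmetric lopsided.
Proof. by move=> i j; rewrite /lopsided eq_sym orbC. Qed.

Lemma card_clique i : #|clique i| = (#|friends_of i|).+1.
Proof. by rewrite cardsU1 !inE eqxx. Qed.

Hypotheses (G_sym : symmetric_network G) (G_bal : structurally_balanced G).

Lemma balanced_FF i j k : i != j -> j != k -> i != k ->
  G i j = Friends -> G j k = Friends -> G i k = Friends.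
Proof. by move=> ij jk ik; case: (G_bal ij jk ik). Qed.

Lemma balanced_EE i j k : i != j -> j != k -> i != k ->
  G i j = Enemies -> G j k = Enemies -> G i k = Friends.
Proof. by move=> ij jk ik; case: (G_bal ij jk ik). Qed.

Lemma balanced_EF i j k : i != j -> j != k -> i != k ->
  G i j = Enemies -> G j k = Friends -> G i k = Enemies.
Proof. by move=> ij jk ik; case: (G_bal ij jk ik). Qed.

Lemma prefer_friends i j : i != j -> G i j = Friends -> prefer i j = set0.
Proof.
move=> ij Gij; apply/setP => l; rewrite !inE; apply/negbTE/negP.
case/andP => /andP[li lj]; case Eli: (G l i); case Elj: (G l j) => //= _.
- by rewrite (balanced_FF li ij lj Eli Gij) in Elj.
- by rewrite (balanced_FF li ij lj Eli Gij) in Elj.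
- have Gji : G j i = Friends by rewrite -G_sym.
  by rewrite (balanced_EF lj _ li Elj Gji) 1?eq_sym in Eli.
Qed.

Lemma prefer_enemies i j : i != j -> G i j = Enemies -> prefer i j \subset friends_of i.
Proof.
move=> ij Gij; apply/subsetP => l; rewrite !inE => /andP[/andP[li lj]].
case Eli: (G l i); case Elj: (G l j) => //= _; rewrite ?li //.
have Gji : G j i = Enemies by rewrite -G_sym.
by rewrite (balanced_EE lj _ li Elj Gji) 1?eq_sym in Eli.
Qed.

Lemma friends_not_lopsided i j : (3 <= n)%N -> i != j -> G i j = Friends -> ~~ lopsided i j.
Proof.
move=> n3 ij Gij; have ji : j != i by rewrite eq_sym.
have Gji : G j i = Friends by rewrite -G_sym.
rewrite /lopsided /dominates (prefer_friends ij Gij) (prefer_friends ji Gji) cards0 ij /=.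
lia.
Qed.

Lemma lopsided_enemies_popular i j : G i j = Enemies -> lopsided i j -> popular i || popular j.
Proof.
move=> Gij /andP[ij /orP[d|d]]; apply/orP; [left|right]; apply: (leq_trans d).
  by rewrite leq_mul2l subset_leq_card ?orbT ?prefer_enemies.
have Gji : G j i = Enemies by rewrite -G_sym.
by rewrite leq_mul2l subset_leq_card ?orbT ?prefer_enemies 1?eq_sym.
Qed.

Lemma no_dominance_chain i j k : i != j -> j != k -> i != k ->
  G i j = Impartial -> G j k = Impartial -> G i k = Impartial ->
  dominates i j -> dominates j k -> False.
Proof.
move=> ij jk ik Gij Gjk Gik; rewrite /dominates.
(* A common voter would be a friend of i and an enemy of k. *)
have disj : prefer i j :&: prefer j k = set0.
  apply/setP => l; rewrite !inE; apply/negbTE/negP.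
  case/andP => /andP[/andP[li lj] ij_l] /andP[/andP[_ lk] jk_l].
  move: ij_l jk_l; case Eli: (G l i); case Elj: (G l j); case Elk: (G l k) => //= _ _.
  have kl : k != l by rewrite eq_sym.
  have ki : k != i by rewrite eq_sym.
  have Gkl : G k l = Enemies by rewrite G_sym.
  by move: (balanced_EF kl li ki Gkl Eli); rewrite G_sym // Gik.
have sub : prefer i j :|: prefer j k \subset ~: [set i; j; k].
  have ki : k != i by rewrite eq_sym.
  have kj : k != j by rewrite eq_sym.
  apply/subsetP => l; rewrite !inE.
  have [-> | li] := eqVneq l i; first by rewrite Gij Gik /= andbF.
  have [-> | lk] := eqVneq l k.
    by rewrite (G_sym ki) (G_sym kj) Gik Gjk /= !andbF.
  by rewrite orbF /=; case: (l == j); rewrite ?andbF.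
have [c3 n3] : #|~: [set i; j; k]| = (n - 3)%N /\ (3 <= n)%N.
  move: (cardsC [set i; j; k]); rewrite card_ord -setUA cardsU1 cards2 !inE negb_or ij ik jk /=.
  lia.
have := subset_leq_card sub.
rewrite -(leq_add2r #|prefer i j :&: prefer j k|) cardsUI disj cards0 addn0 c3.
lia.
Qed.

Lemma no_lopsided_impartial_triangle i j k : i != j -> j != k -> i != k ->
  G i j = Impartial -> G j k = Impartial -> G i k = Impartial ->
  lopsided i j -> lopsided j k -> lopsided i k -> False.
Proof.
move=> ij jk ik Gij Gjk Gik.
have ji : j != i by rewrite eq_sym.
have kj : k != j by rewrite eq_sym.
have ki : k != i by rewrite eq_sym.
have Gji : G j i = Impartial by rewrite -G_sym.
have Gkj : G k j = Impartial by rewrite -G_sym.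
have Gki : G k i = Impartial by rewrite -G_sym.
have chain := no_dominance_chain.
case/andP=> _ /orP[] a /andP[_ /orP[] b] /andP[_ /orP[] c]; by [
  exact: (chain i j k) | exact: (chain i k j) | exact: (chain k i j)
| exact: (chain j i k) | exact: (chain j k i) | exact: (chain k j i)].
Qed.

Lemma clique_friends j x y : x \in clique j -> y \in clique j -> x != y -> G x y = Friends.
Proof.
have Fj z : z \in clique j -> z != j -> G z j = Friends.
  by rewrite !inE => /orP[/eqP->|/andP[_ /eqP]]; rewrite ?eqxx.
move=> xC yC xy; have yx : y != x by rewrite eq_sym.
have [xj|xj] := eqVneq x j; first by subst x; rewrite G_sym // Fj.
have [yj|yj] := eqVneq y j; first by subst y; exact: Fj.
have jy : j != y by rewrite eq_sym.
by rewrite (balanced_FF xj jy xy (Fj _ xC xj)) // G_sym // Fj.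
Qed.

Lemma clique_not_lopsided j : (3 <= n)%N -> {in clique j &, forall x y, ~~ lopsided x y}.
Proof.
move=> n3 x y xC yC; have [<-|xy] := eqVneq x y; first by rewrite /lopsided eqxx.
exact: friends_not_lopsided (clique_friends xC yC xy).
Qed.

Lemma clique_closed j v w : v \notin clique j -> w \in clique v -> w \notin clique j.
Proof.
move=> vj wv; apply: contra vj => wj; have [-> //|vw] := eqVneq v w.
have Gvw := clique_friends (setU11 _ _) wv vw.
rewrite !inE; have [//|vj] := eqVneq v j.
have [<-|wj'] := eqVneq w j; first by rewrite Gvw.
by rewrite (balanced_FF vw wj' vj Gvw (clique_friends wj (setU11 _ _) wj')).
Qed.

Lemma popular_clique_complement j x :
  popular j -> popular x -> x \notin clique j -> clique x = ~: clique j.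
Proof.
move=> pj px xj; apply/eqP; rewrite eqEcard.
have -> /= : clique x \subset ~: clique j.
  by apply/subsetP => w wx; rewrite inE (clique_closed xj wx).
have := cardsC (clique j); move: pj px; rewrite /popular card_ord !card_clique.
move: #|friends_of j| #|friends_of x| #|~: clique j| => a b c.
lia.
Qed.

Lemma lopsided_impartial (W : {set 'I_n}) : (3 <= n)%N ->
    {in W &, forall x y, G x y = Enemies -> ~~ lopsided x y} ->
  {in W &, forall x y, lopsided x y -> G x y = Impartial}.
Proof.
move=> n3 noE x y xW yW lxy; have xy : x != y by case/andP: lxy.
case Gxy: (G x y) => //; first by move: lxy; rewrite (negPf (friends_not_lopsided n3 xy Gxy)).
by move: lxy; rewrite (negPf (noE x y xW yW Gxy)).
Qed.

Lemma lopsided_triangle_free (W : {set 'I_n}) : (3 <= n)%N ->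
    {in W &, forall x y, G x y = Enemies -> ~~ lopsided x y} ->
  forall u v w, u \in W -> v \in W -> w \in W ->
    lopsided u v -> lopsided v w -> lopsided u w -> False.
Proof.
move=> n3 noE u v w uW vW wW luv lvw luw; have imp := lopsided_impartial n3 noE.
have neq x y : lopsided x y -> x != y by case/andP.
exact: (no_lopsided_impartial_triangle (neq _ _ luv) (neq _ _ lvw) (neq _ _ luw)
          (imp u v _ _ luv) (imp v w _ _ lvw) (imp u w _ _ luw)).
Qed.

Lemma outside_popular_friends j x y : popular j -> popular x ->
  x \notin clique j -> y \notin clique j -> x != y -> G x y = Friends.
Proof.
move=> pj px xj yj xy; apply: (clique_friends (setU11 _ _) _ xy).
by rewrite (popular_clique_complement pj px xj) inE.
Qed.

Lemma lopsided_cut : (3 <= n)%N -> exists C : {set 'I_n},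
  [/\ C = set0 \/ (n <= 2 * #|C|)%N,
      {in C &, forall x y, ~~ lopsided x y} &
      {in ~: C &, forall x y, G x y = Enemies -> ~~ lopsided x y}].
Proof.
move=> n3; have [j pj|nopop] := pickP popular.
  exists (clique j); split; first (by right; move: pj; rewrite /popular card_clique; lia).
    exact: clique_not_lopsided.
  move=> x y; rewrite !in_setC => xj yj Gxy; apply/negP => lxy.
  have xy : x != y by case/andP: lxy.
  case/orP: (lopsided_enemies_popular Gxy lxy) => [px|py].
    by rewrite (outside_popular_friends pj px xj yj xy) in Gxy.
  by rewrite G_sym // (outside_popular_friends pj py yj xj) 1?eq_sym in Gxy.
exists set0; split; [by left | by move=> x; rewrite inE |].
move=> x y _ _ Gxy; apply/negP => /(lopsided_enemies_popular Gxy).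
by rewrite !nopop.
Qed.

Lemma lopsided_count : (3 <= n)%N ->
  (8 * \sum_i #|[set j | lopsided i j]| <= 5 * n ^ 2)%N.
Proof.
move=> n3; have [C [hC inC noE]] := lopsided_cut n3.
have := mantel lopsided_sym (lopsided_triangle_free n3 noE).
have := sum_card_cut inC.
have := cardsC C; rewrite card_ord.
have : #|C| = 0%N \/ (n <= 2 * #|C|)%N by case: hC => [->|]; [left; exact: cards0 | right].
move: (\sum_i _)%N (\sum_(u in ~: C) _)%N #|C| #|~: C| => a d c w.
(* When c >= w, the slack 5n^2 - 16cw - 4w^2 is (5c - w)(c - w). *)
case=> [-> | hc] card_CW cut M; nia.
Qed.
End Network.

Section Votes.
Variables (n : nat) (G : network n).

Lemma lev_needy_lt (N : {set 'I_n}) l i j : i \in N -> j \notin N ->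
  ((lev G N l i < lev G N l j) = (rank3 (G l i) <= rank3 (G l j)))%N /\
  ((lev G N l j < lev G N l i) = (rank3 (G l j) < rank3 (G l i)))%N.
Proof. by move=> iN jN; rewrite /lev iN (negPf jN); case: (G l i); case: (G l j). Qed.

Lemma votes_against_needy (N : {set 'I_n}) i j : i \in N -> j \notin N ->
  votes G N j i = #|prefer G j i|.
Proof. by move=> iN jN; apply: eq_card => l; rewrite !inE (lev_needy_lt l iN jN).2. Qed.

Lemma votes_needy_sum (N : {set 'I_n}) i j : i \in N -> j \notin N -> i != j ->
  (votes G N i j + votes G N j i = n - 2)%N.
Proof.
move=> iN jN ij; set B := [set l | rank3 (G l j) < rank3 (G l i)]%N.
have -> : votes G N i j = #|~: [set i; j] :\: B|.
  apply: eq_card => l; rewrite !inE (lev_needy_lt l iN jN).1 leqNgt.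
  by case: (l == i); case: (l == j); case: (_ < _)%N.
have -> : votes G N j i = #|~: [set i; j] :&: B|.
  apply: eq_card => l; rewrite !inE (lev_needy_lt l iN jN).2.
  by case: (l == i); case: (l == j); case: (_ < _)%N.
rewrite addnC cardsID; move: (cardsC [set i; j]); rewrite cards2 ij card_ord.
lia.
Qed.

Lemma votes_support (N N' : {set 'I_n}) i j :
  (i \in N) = (i \in N') -> (j \in N) = (j \in N') -> votes G N i j = votes G N' i j.
Proof. by move=> Ei Ej; apply: eq_card => l; rewrite !inE /lev Ei Ej. Qed.
End Votes.

Local Open Scope ring_scope.

Definition duel (R : fieldType) (x y : nat) : R :=
  if (y < x)%N then 1 else if x == y then 2^-1 else 0.

Lemma duelC (R : realFieldType) x y : duel R x y + duel R y x = 1.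
Proof. by rewrite /duel; case: ltngtP => _; rewrite ?addr0 ?add0r //; lra. Qed.

Lemma duel_ge0 (R : realFieldType) x y : 0 <= duel R x y.
Proof. by rewrite /duel; do 2!case: ifP => _ //; rewrite invr_ge0 ler0n. Qed.

Lemma duel_split_ge (R : realFieldType) (m a b : nat) : (a + b <= m)%N ->
  1 + (~~ ((m <= 2 * a) || (m <= 2 * b)))%N%:R <= duel R (m - b) b + duel R (m - a) a.
Proof.
move=> abm; have win c : (2 * c < m)%N -> duel R (m - c) c = 1.
  by move=> cm; rewrite /duel ifT // ltn_subRL addnn -mul2n.
rewrite ![(m <= _)%N]leqNgt; case: (ltnP (2 * a) m) => am; case: (ltnP (2 * b) m) => bm /=.
- by rewrite !win //; lra.
- by rewrite (win a) //; have := duel_ge0 R (m - b) b; lra.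
- by rewrite (win b) //; have := duel_ge0 R (m - a) a; lra.
have [-> ->] : (m - b = b /\ m - a = a)%N by lia.
by rewrite /duel !ltnn !eqxx; lra.
Qed.

Lemma gpairE (R : fieldType) n (G : network n) N i j :
  gpair R G N i j = duel R (votes G N i j) (votes G N j i).
Proof. by []. Qed.

Lemma gpair_alone (R : realFieldType) n (G : network n) i j : i != j ->
  1 + (~~ lopsided G i j)%:R <= gpair R G [set i] i j + gpair R G [set j] j i.
Proof.
move=> ij; have ji : j != i by rewrite eq_sym.
have iN : i \in [set i] := set11 i; have jN : j \in [set j] := set11 j.
have jNi : j \notin [set i] by rewrite in_set1.
have iNj : i \notin [set j] by rewrite in_set1.
have prefer_le : (#|prefer G i j| + #|prefer G j i| <= n - 2)%N.
  rewrite -(votes_needy_sum G iN jNi ij) -(votes_against_needy G iN jNi) leq_add2r.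
  apply/subset_leq_card/subsetP => l; rewrite !inE (lev_needy_lt G l iN jNi).1.
  by case/andP => -> /ltnW.
rewrite !gpairE.
have /(canRL (addnK _)) -> := votes_needy_sum G iN jNi ij.
have /(canRL (addnK _)) -> := votes_needy_sum G jN iNj ji.
rewrite (votes_against_needy G iN jNi) (votes_against_needy G jN iNj).
by rewrite /lopsided ij /dominates duel_split_ge.
Qed.

Lemma sum_set_prod (R : comNzRingType) (T : finType) (phi : T -> bool -> R) :
  \sum_(N : {set T}) \prod_x phi x (x \in N) = \prod_x (phi x true + phi x false).
Proof.
under [RHS]eq_bigr do rewrite -big_bool.
rewrite bigA_distr_bigA /= (reindex (fun f : {ffun T -> bool} => [set x | f x])) /=.
  by apply: eq_bigr => f _; apply: eq_bigr => x _; rewrite inE.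
exists (fun N : {set T} => [ffun x => x \in N]) => [f _|N _].
  by apply/ffunP => x; rewrite ffunE inE.
by apply/setP => x; rewrite inE ffunE.
Qed.

Definition bernoulli (R : fieldType) (q : R) (b : bool) : R := if b then q else 1 - q.

Lemma probN_prod (R : fieldType) n (q : R) (N : {set 'I_n}) :
  probN q N = \prod_x bernoulli q (x \in N).
Proof.
rewrite /probN (bigID (mem N)) /= (eq_bigr (fun=> q)) => [|x ->//].
rewrite [X in _ = _ * X](eq_bigr (fun=> 1 - q)) => [|x /negPf ->//]; rewrite !prodr_const.
congr (_ * _ ^+ _); rewrite -[RHS](@eq_card _ (~: N)) => [|x]; last by rewrite inE.
by rewrite cardsCs setCK card_ord.
Qed.

Lemma probN_pair (R : fieldType) n (q : R) (i j : 'I_n) (bi bj : bool) : i != j ->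
  \sum_N probN q N * (((i \in N) == bi) && ((j \in N) == bj))%:R
  = bernoulli q bi * bernoulli q bj.
Proof.
move=> ij; pose phi (x : 'I_n) b := bernoulli q b *
  (if x == i then (b == bi)%:R else 1) * (if x == j then (b == bj)%:R else 1).
have -> : \sum_N probN q N * (((i \in N) == bi) && ((j \in N) == bj))%:R
        = \sum_(N : {set 'I_n}) \prod_x phi x (x \in N).
  apply: eq_bigr => N _; rewrite !big_split /= probN_prod -mulnb natrM.
  by rewrite -!(big_mkcond (fun x => x == _)) !big_pred1_eq mulrA.
rewrite sum_set_prod (bigD1 i) // (bigD1 j) 1?eq_sym //= big1 => [|x /andP[xi xj]].
  have ji : j != i by rewrite eq_sym.
  rewrite /phi !eqxx (negPf ij) (negPf ji); clear phi.
  by case: bi; case: bj; rewrite /= !(mulr1, mulr0, addr0, add0r).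
by rewrite /phi (negPf xi) (negPf xj) !mulr1 /bernoulli subrKC.
Qed.

Lemma expect_needy_pair (R : fieldType) n (q : R) (i j : 'I_n) (F : {set 'I_n} -> R) :
    i != j ->
    (forall N N' : {set 'I_n}, (i \in N) = (i \in N') -> (j \in N) = (j \in N') -> F N = F N') ->
  \sum_N probN q N * ((i \in N)%:R * F N) = q ^+ 2 * F [set i; j] + q * (1 - q) * F [set i].
Proof.
move=> ij F_supp.
have decompose (N : {set 'I_n}) : (i \in N)%:R * F N
    = (((i \in N) == true) && ((j \in N) == true))%:R * F [set i; j]
    + (((i \in N) == true) && ((j \in N) == false))%:R * F [set i].
  have ji : (j == i) = false by rewrite eq_sym (negPf ij).
  case iN: (i \in N); case jN: (j \in N); rewrite /= ?mul0r ?mul1r ?addr0 ?add0r //;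
    by apply: F_supp; rewrite !inE ?eqxx ?ji ?iN ?jN ?orbT.
under eq_bigr do rewrite decompose mulrDr !mulrA.
by rewrite big_split -!big_distrl /= !probN_pair // expr2.
Qed.

Lemma gpair_support (R : fieldType) n (G : network n) (N N' : {set 'I_n}) i j :
  (i \in N) = (i \in N') -> (j \in N) = (j \in N') -> gpair R G N i j = gpair R G N' i j.
Proof. by move=> Ei Ej; rewrite !gpairE (votes_support G Ei Ej) (votes_support G Ej Ei). Qed.

Lemma sum_offdiagC (R : nmodType) (T : finType) (F : T -> T -> R) :
  \sum_i \sum_(j | j != i) F i j = \sum_i \sum_(j | j != i) F j i.
Proof.
under eq_bigr do rewrite big_mkcond; under [RHS]eq_bigr do rewrite big_mkcond.
by rewrite exchange_big; apply: eq_bigr => i _; apply: eq_bigr => j _; rewrite eq_sym.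
Qed.

Lemma sum_offdiag1 (R : pzRingType) n :
  \sum_(i < n) \sum_(j | j != i) (1 : R) = n%:R * (n%:R - 1).
Proof.
case: n => [|n]; first by rewrite big_ord0 mul0r.
have row (i : 'I_n.+1) : \sum_(j | j != i) (1 : R) = n%:R.
  by rewrite sumr_const (eq_card (B := predC1 i)) ?cardC1 ?card_ord // => x; rewrite !inE.
rewrite (eq_bigr _ (fun i _ => row i)) sumr_const card_ord -[_ *+ n.+1]mulr_natr.
by rewrite -natrM mulnC natrM -addn1 natrD addrK.
Qed.

Lemma PD_pairs (R : realFieldType) n (q : R) (G : network n) :
  PD q G = 2 / (n%:R * (n%:R - 1)) *
    (q ^+ 2 * \sum_i \sum_(j | j != i) gpair R G [set i; j] i j
     + q * (1 - q) * \sum_i \sum_(j | j != i) gpair R G [set i] i j).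
Proof.
have -> : q ^+ 2 * \sum_i \sum_(j | j != i) gpair R G [set i; j] i j
          + q * (1 - q) * \sum_i \sum_(j | j != i) gpair R G [set i] i j
        = \sum_i \sum_(j | j != i) \sum_N probN q N * ((i \in N)%:R * gpair R G N i j).
  rewrite !big_distrr -big_split; apply: eq_bigr => i _.
  rewrite !big_distrr -big_split; apply: eq_bigr => j ji.
  rewrite (@expect_needy_pair _ _ q i j (fun N => gpair R G N i j)) 1?eq_sym //.
  by move=> N N'; exact: gpair_support.
rewrite /PD /gD; under eq_bigr => N _ do rewrite big_mkcond big_distrr /=.
rewrite exchange_big big_distrr /=; apply: eq_bigr => i _.
rewrite exchange_big big_distrr /=; apply: eq_bigr => N _.
case: (i \in N); last by rewrite mulr0 big1 ?mulr0 // => j _; rewrite mul0r mulr0.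
by rewrite mulrCA big_distrr; congr (_ * _); apply: eq_bigr => j _; rewrite mul1r.
Qed.

Lemma sum_gpair_pairs (R : realFieldType) n (G : network n) :
  \sum_i \sum_(j | j != i) gpair R G [set i; j] i j = n%:R * (n%:R - 1) / 2.
Proof.
set S := LHS; have : S + S = n%:R * (n%:R - 1).
  rewrite {2}/S sum_offdiagC -big_split -sum_offdiag1; apply: eq_bigr => i _.
  rewrite -big_split; apply: eq_bigr => j _; rewrite [[set j; i]]setUC; exact: duelC.
move=> <-; lra.
Qed.

Lemma sum_offdiag_lopsided (R : pzRingType) n (G : network n) i :
  \sum_(j | j != i) (lopsided G i j)%:R = #|[set j | lopsided G i j]|%:R :> R.
Proof.
rewrite -sum1_card natr_sum big_mkcond [RHS]big_mkcond; apply: eq_bigr => j _.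
by rewrite inE /lopsided [j == i]eq_sym; case: (i != j); case: (_ || _).
Qed.

Lemma sum_gpair_alone (R : realFieldType) n (G : network n) :
  2 * (n%:R * (n%:R - 1)) - (\sum_i #|[set j | lopsided G i j]|)%:R
    <= 2 * \sum_i \sum_(j | j != i) gpair R G [set i] i j.
Proof.
have -> : 2 * (n%:R * (n%:R - 1)) - (\sum_i #|[set j | lopsided G i j]|)%:R
        = \sum_i \sum_(j | j != i) (1 + (~~ lopsided G i j)%:R) :> R.
  rewrite -sum_offdiag1 big_distrr natr_sum -sumrB; apply: eq_bigr => i _.
  rewrite -sum_offdiag_lopsided big_distrr -sumrB; apply: eq_bigr => j _.
  by case: (lopsided G i j); rewrite /=; lra.
rewrite mulr_natl mulr2n [X in _ <= _ + X]sum_offdiagC -big_split ler_sum // => i _.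
by rewrite -big_split ler_sum // => j ji; rewrite gpair_alone // eq_sym.
Qed.

Unset Implicit Arguments.

Theorem proposition4 (R : realFieldType) (n : nat) (q : R) (G : network n) :
  (3 <= n)%N -> 0 < q -> q < 1 ->
  symmetric_network G -> structurally_balanced G ->
  q + q * (1 - q) * ((3 * n%:R - 8) / (8 * (n%:R - 1))) <= PD q G.
Proof.
move=> n3 q0 q1 G_sym G_bal.
have := sum_gpair_alone R G; have := lopsided_count G_sym G_bal n3.
rewrite -(ler_nat R) !natrM PD_pairs sum_gpair_pairs.
set S := \sum_i _; set B := (\sum_i _)%:R; set N : R := n%:R => Bcount TF.
have N3 : 3 <= N by rewrite (ler_nat R 3).
rewrite -subr_ge0.
have -> : 2 / (N * (N - 1)) * (q ^+ 2 * (N * (N - 1) / 2) + q * (1 - q) * S)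
          - (q + q * (1 - q) * ((3 * N - 8) / (8 * (N - 1))))
        = q * (1 - q) * ((2 * S - (2 * (N * (N - 1)) - B)) / (N * (N - 1))
                         + (5 * (N * N) - 8 * B) / (8 * (N * (N - 1)))).
  by field; rewrite -/N; apply/andP; split; apply/eqP; lra.
have K0 : 0 < N * (N - 1) by apply: mulr_gt0; lra.
by apply: mulr_ge0; [apply: mulr_ge0 | apply: addr_ge0; apply: divr_ge0]; lra.
Qed.
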